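(* Let $\mathbb{F}\subset\mathbb{C}$ be a field, let $n\in\mathbb{N}$, let $\alpha_1,\ldots,\alpha_n$ be non-negative integers, and let $F\colon\mathbb{F}^n\to\mathbb{C}$ be a symmetric $n$-additive function. Then the function $g\colon\mathbb{F}\to\mathbb{C}$ defined by \[ g(x)=F(x^{\alpha_1},\ldots,x^{\alpha_n})\qquad(x\in\mathbb{F}) \] (with the convention $x^0=1$) is a generalized monomial of degree $\alpha_1+\cdots+\alpha_n$.
   Context: A function $A\colon\mathbb{F}^k\to\mathbb{C}$ is $k$-additive if it is additive (with respect to the additive group of $\mathbb{F}$) in each variable; a $0$-additive function is a constant. A function $f\colon\mathbb{F}\to\mathbb{C}$ is a generalized monomial of degree $k$ if there is a symmetric $k$-additive $A\colon\mathbb{F}^k\to\mathbb{C}$ with $f(x)=A(x,\ldots,x)$ for all $x\in\mathbb{F}$. *)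

From HB Require Import structures.
From mathcomp Require Import all_boot all_order all_algebra all_fingroup.
From mathcomp Require Import reals.
From mathcomp Require Import complex.
Set Implicit Arguments. Unset Strict Implicit. Unset Printing Implicit Defensive.
Import Order.TTheory GRing.Theory Num.Theory.
Local Open Scope ring_scope.

Definition upd (T : Type) (k : nat) (v : 'I_k -> T) (i : 'I_k) (a : T) : 'I_k -> T :=
  fun j => if j == i then a else v j.

Definition k_additive (F : fieldType) (V : zmodType) (k : nat)
    (A : ('I_k -> F) -> V) : Prop :=
  forall (i : 'I_k) (v : 'I_k -> F) (a b : F),
    A (upd v i (a + b)) = A (upd v i a) + A (upd v i b).

Definition symmetric_fun (F : Type) (V : Type) (k : nat)
    (A : ('I_k -> F) -> V) : Prop :=
  forall (s : {perm 'I_k}) (v : 'I_k -> F), A (fun j => v (s j)) = A v.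

Definition generalized_monomial (F : fieldType) (V : zmodType) (k : nat)
    (f : F -> V) : Prop :=
  exists A : ('I_k -> F) -> V,
    [/\ k_additive A, symmetric_fun A & forall x : F, f x = A (fun _ => x)].

From Stdlib Require Import FunctionalExtensionality.
From HB Require Import structures.
From mathcomp Require Import all_boot all_order all_algebra all_fingroup.
From mathcomp Require Import reals complex.
Import Order.TTheory GRing.Theory Num.Theory.
Local Open Scope ring_scope.

(* Let N = alpha_1 + ... + alpha_n and split the N variables y_1, ..., y_N
   into n disjoint blocks, the i-th of size alpha_i.  The function
     B(y) = Fn(prod of the y_j in block 1, ..., prod of the y_j in block n)
   is N-additive: each variable y_j is a linear factor of exactly one
   argument of Fn.  On the diagonal y = (x, ..., x) the i-th block product
   is x^alpha_i, so B(x, ..., x) = Fn(x^alpha_1, ..., x^alpha_n).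
   B need not be symmetric, but its symmetrization
     A(y) = (1/N!) sum over permutations s of B(y o s)
   is symmetric, still N-additive, and agrees with B on the diagonal; since
   the codomain has characteristic 0, dividing by N! is allowed. *)

(* Updating a coordinate commutes with reindexing: this is how additivity
   in the j-th variable is transported along a permutation s. *)
Lemma upd_perm (T : Type) (N : nat) (s : {perm 'I_N}) (y : 'I_N -> T)
    (k : 'I_N) (c : T) :
  (fun j => upd y k c (s j)) = upd (fun j => y (s j)) ((s^-1)%g k) c.
Proof.
by apply: functional_extensionality => j; rewrite /upd (canF_eq (permK s)).
Qed.

Section Symmetrization.
Variables (F : fieldType) (C : numFieldType) (N : nat).
Variable B : ('I_N -> F) -> C.

Definition symmetrize (y : 'I_N -> F) : C :=
  (N`!%:R)^-1 * \sum_(s : {perm 'I_N}) B (fun j => y (s j)).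

(* Each term B(y o s) is additive in y_k, as B is additive in y_(s^-1 k). *)
Lemma symmetrize_additive : k_additive B -> k_additive symmetrize.
Proof.
move=> addB k y a b; rewrite /symmetrize -mulrDr -big_split /=.
by congr (_ * _); apply: eq_bigr => s _; rewrite !upd_perm addB.
Qed.

(* Precomposing with a permutation t only reindexes the sum by s |-> t s. *)
Lemma symmetrize_symmetric : symmetric_fun symmetrize.
Proof.
move=> t y; rewrite /symmetrize; congr (_ * _).
rewrite [RHS](reindex_inj (mulIg t)) /=; apply: eq_bigr => s _; congr B.
by apply: functional_extensionality => j; rewrite permM.
Qed.

(* On constant tuples every term of the average equals B itself. *)
Lemma symmetrize_diag (x : F) : symmetrize (fun _ => x) = B (fun _ => x).
Proof.
rewrite /symmetrize sumr_const (_ : #|_| = N`!); last exact: card_Sn.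
by rewrite -[B _ *+ _]mulr_natl mulrA mulVf ?mul1r // pnatr_eq0 -lt0n fact_gt0.
Qed.

End Symmetrization.

Arguments symmetrize {F C N} B y.

Section Blocks.
Variables (n : nat) (alpha : 'I_n -> nat).
Local Notation N := (\sum_(i < n) alpha i)%N.

(* The disjoint union of the blocks: pairs (i, k) with k < alpha_i. *)
Definition block_slot : finType := {i : 'I_n & 'I_(alpha i)}.

Lemma card_block_slot : #|{: block_slot}| = N.
Proof.
rewrite card_tagged -big_enum /=.
elim: (enum _) => [|i s IHs]; first by rewrite big_nil.
by rewrite big_cons /= IHs card_ord.
Qed.

(* A fixed enumeration of the slots by 'I_N; block j is the block of the
   j-th variable. *)
Definition slot (j : 'I_N) : block_slot :=
  enum_val (cast_ord (esym card_block_slot) j).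
Definition block (j : 'I_N) : 'I_n := tag (slot j).

Lemma slot_bij : bijective slot.
Proof.
apply: (bij_comp (enum_val_bij block_slot)).
by exists (cast_ord card_block_slot) => j; apply: val_inj.
Qed.

Lemma card_slot_fiber (i : 'I_n) :
  #|[pred t : block_slot | tag t == i]| = alpha i.
Proof.
pose inj_i (k : 'I_(alpha i)) : block_slot := Tagged (fun i => 'I_(alpha i)) k.
have inj_inj : injective inj_i by move=> k1 k2 /eqP; rewrite eq_Tagged => /eqP.
rewrite -[RHS]card_ord -(card_image inj_inj); apply: eq_card => t.
rewrite inE; apply/eqP/imageP => [Eti | [k _ ->] //].
by case: t Eti => j k /= Eji; subst j; exists k.
Qed.

Lemma card_block (i : 'I_n) : #|[pred j | block j == i]| = alpha i.
Proof.
rewrite -card_slot_fiber -(on_card_preimset (f := slot)); last first.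
  by case: slot_bij => g slotK gK; exists g.
by apply: eq_card => j; rewrite !inE.
Qed.

Definition block_prod {R : comRingType} (y : 'I_N -> R) (i : 'I_n) : R :=
  \prod_(j | block j == i) y j.

Lemma block_prod_upd (R : comRingType) (y : 'I_N -> R) (k : 'I_N) (c : R) :
  block_prod (upd y k c) =
  upd (block_prod y) (block k) (c * \prod_(j | (block j == block k) && (j != k)) y j).
Proof.
apply: functional_extensionality => i; rewrite /block_prod /upd.
have [-> | ne_ik] := eqVneq i (block k).
  rewrite (bigD1 k) //= eqxx; congr (_ * _).
  by apply: eq_bigr => j /andP[_ /negbTE ->].
apply: eq_bigr => j /eqP bj; case: eqP => // Ejk.
by rewrite -bj Ejk eqxx in ne_ik.
Qed.

Lemma block_prod_const (R : comRingType) (x : R) :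
  block_prod (fun _ => x) = fun i => x ^+ alpha i.
Proof.
by apply: functional_extensionality => i; rewrite /block_prod prodr_const card_block.
Qed.

Lemma block_prod_additive (F : fieldType) (V : zmodType)
    (Fn : ('I_n -> F) -> V) :
  k_additive Fn -> k_additive (fun y => Fn (block_prod y)).
Proof.
by move=> addFn k y a b /=; rewrite !block_prod_upd mulrDl addFn.
Qed.

End Blocks.

Arguments block_prod {n} alpha {R} y i.

Local Open Scope complex_scope.

Theorem lemma3 (R : realType) (F : fieldType) (iota : {rmorphism F -> R[i]})
    (n : nat) (alpha : 'I_n -> nat) (Fn : ('I_n -> F) -> R[i]) :
  k_additive Fn -> symmetric_fun Fn ->
  generalized_monomial (\sum_(i < n) alpha i)%N
    (fun x : F => Fn (fun i => x ^+ alpha i)).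
Proof.
move=> addFn _.
pose B y := Fn (block_prod alpha y).
exists (symmetrize B); split.
- by apply: symmetrize_additive; apply: block_prod_additive.
- exact: symmetrize_symmetric.
- by move=> x; rewrite symmetrize_diag /B block_prod_const.
Qed.
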